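(* Let $\Gamma$ be a finite connected $(G,s)$-geodesic-transitive graph with $s\ge2$ and $G\le\mathrm{Aut}(\Gamma)$. Let $1\ne N\trianglelefteq G$ be intransitive on $V(\Gamma)$. Suppose that $\Gamma$ is not isomorphic to the complete multipartite graph $K_{m[b]}$ for any $m\ge3$ and $b\ge2$. Then either (i) $N$ has exactly $2$ orbits on $V(\Gamma)$ and $\Gamma$ is bipartite; or (ii) $N$ has at least $3$ orbits on $V(\Gamma)$, $N$ is semiregular on $V(\Gamma)$, $\Gamma$ is a cover of $\Gamma_N$, and $\Gamma_N$ is $(G/N,s')$-geodesic-transitive where $s'=\min\{s,\mathrm{diam}(\Gamma_N)\}$.
   Context: $K_{m[b]}$ is the complete multipartite graph with $m$ parts each of size $b$. An $s$-geodesic is a path $(v_0,\dots,v_s)$ with $d(v_0,v_s)=s$; $\Gamma$ is $(G,s)$-geodesic-transitive if it has an $s$-geodesic and $G$ is transitive on the set of $i$-geodesics for each $i\le s$. For $N\trianglelefteq G$, $\Gamma_N$ is the graph whose vertices are the $N$-orbits, two distinct orbits adjacent iff some edge of $\Gamma$ joins them; $G/N$ acts on $\Gamma_N$. $\Gamma$ is a cover of $\Gamma_N$ if for each edge $\{B,C\}$ of $\Gamma_N$ and $v\in B$, $v$ has exactly one neighbour in $C$. Semiregular means all point stabilisers in $N$ are trivial. *)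

From mathcomp Require Import all_boot all_fingroup.
Set Implicit Arguments. Unset Strict Implicit. Unset Printing Implicit Defensive.

(* A walk from v is given by the sequence p of the following vertices,
   with [path e v p]; its length is [size p] and it ends at [last v p]. *)

Section Graphs.
Variable V : finType.

Definition simple_graph (e : rel V) : Prop :=
  symmetric e /\ irreflexive e.

Definition dist_is (e : rel V) (x y : V) (n : nat) : Prop :=
  (exists p, [/\ path e x p, last x p = y & size p = n]) /\
  (forall p, path e x p -> last x p = y -> n <= size p).

Definition geodesic (e : rel V) (v : V) (p : seq V) : Prop :=
  path e v p /\ dist_is e v (last v p) (size p).

Definition diam_is (W : {set V}) (e : rel V) (d : nat) : Prop :=
  (exists x y, [/\ x \in W, y \in W & dist_is e x y d]) /\
  (forall x y n, x \in W -> y \in W -> dist_is e x y n -> n <= d).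

Definition geod_trans (aT : finGroupType) (W : {set V}) (e : rel V)
    (A : {set aT}) (act : aT -> V -> V) (s : nat) : Prop :=
  (exists v p, [/\ v \in W, size p = s & geodesic e v p]) /\
  (forall i, i <= s -> forall v p w q,
     v \in W -> w \in W -> size p = i -> size q = i ->
     geodesic e v p -> geodesic e w q ->
     exists2 g, g \in A & act g v = w /\ map (act g) p = q).

Definition bipartite (e : rel V) : Prop :=
  exists f : V -> bool, forall x y, e x y -> f x != f y.

End Graphs.

Definition Kmb (m b : nat) : rel ('I_m * 'I_b) :=
  fun x y => x.1 != y.1.

Definition graph_iso (V1 V2 : finType) (e1 : rel V1) (e2 : rel V2) : Prop :=
  exists h : V1 -> V2, bijective h /\ forall x y, e2 (h x) (h y) = e1 x y.

Definition orbs (T : finType) (N : {set {perm T}}) : {set {set T}} :=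
  [set orbit 'P N x | x in [set: T]].

Definition quot_rel (T : finType) (e : rel T) (N : {set {perm T}}) : rel {set T} :=
  fun B C => [&& B \in orbs N, C \in orbs N, B != C &
                [exists x in B, exists y in C, e x y]].

(* induced action of G (hence of G/N) on sets of vertices *)
Definition set_act (T : finType) (g : {perm T}) (B : {set T}) : {set T} :=
  [set g x | x in B].

Definition semiregular (T : finType) (N : {set {perm T}}) : Prop :=
  forall x : T, ('C_N[x | 'P] = 1)%g.

Definition is_cover (T : finType) (e : rel T) (N : {set {perm T}}) : Prop :=
  forall B C, quot_rel e N B C -> forall v, v \in B ->
    #|[set w in C | e v w]| = 1.

From mathcomp Require Import all_boot all_fingroup.
From Stdlib Require Import Classical.
Set Implicit Arguments. Unset Strict Implicit. Unset Printing Implicit Defensive.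

(* Arc-transitivity and connectivity force every edge to join two distinct
   N-orbits, so with two orbits the graph is bipartite.  With at least three
   orbits, either some vertex v has two neighbours u, w in one orbit, or every
   vertex has at most one neighbour in each orbit.  In the first case (u, v, w)
   is a 2-geodesic, so by 2-geodesic-transitivity the ends of every 2-geodesic
   lie in one orbit; as every vertex sees at least two orbits, there is no
   3-geodesic, and two vertices are adjacent iff their orbits differ: the graph
   is K_{m[b]}.  In the second case an element of N fixing a vertex fixes its
   neighbours, hence everything; each vertex has exactly one neighbour in each
   adjacent orbit; and geodesics of Gamma_N lift to geodesics of Gamma, so
   transitivity on geodesics descends to the quotient. *)

Lemma ex_minn_prop (P : nat -> Prop) :
  (exists n, P n) -> exists2 n, P n & forall m, P m -> n <= m.
Proof.
move=> [n Pn]; elim/ltn_ind: n Pn => n IHn Pn.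
have [[m Pm ltmn] | no_less] := classic (exists2 m, P m & m < n).
  exact: IHn Pm.
exists n => // m Pm; rewrite leqNgt; apply/negP => ltmn; apply: no_less.
by exists m.
Qed.

Lemma ex_maxn_prop (P : nat -> Prop) (M : nat) :
  (exists n, P n) -> (forall n, P n -> n <= M) ->
  exists2 n, P n & forall m, P m -> m <= n.
Proof.
elim: M => [|M IHM] exP leM.
  by case: exP => n Pn; exists n => // m /leM; rewrite leqn0 => /eqP->.
have [PM | notPM] := classic (P M.+1); first by exists M.+1.
apply: IHM => // n Pn; rewrite -ltnS ltn_neqAle leM // andbT.
by apply: contraPneq notPM => <-.
Qed.

Section Geodesics.
Variables (V : finType) (e : rel V).

Lemma connect_dist x y : connect e x y -> exists n, dist_is e x y n.
Proof.
move=> /connectP[p p_path p_last].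
pose P n := exists q, [/\ path e x q, last x q = y & size q = n].
have P_p : P (size p) by exists p.
have [n [q [q_path q_last q_size]] q_min] := ex_minn_prop (ex_intro P _ P_p).
exists n; split; first by exists q.
by move=> r r_path r_last; apply: q_min; exists r.
Qed.

Lemma dist_geodesic x y n :
  dist_is e x y n -> exists p, [/\ geodesic e x p, last x p = y & size p = n].
Proof.
by move=> dxy; case: (dxy) => [[p [p_path p_last p_size]] _]; exists p;
  rewrite /geodesic p_last p_size.
Qed.

Lemma dist_lt_card x y n : dist_is e x y n -> n < #|V|.
Proof.
move=> [[p [p_path p_last _]] p_min]; move: p_last.
case: (shortenP p_path) => q q_path q_uniq _ q_last.
apply: (@leq_trans (size q).+1); first by rewrite ltnS p_min.
by move/card_uniqP: q_uniq => /= <-; apply: max_card.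
Qed.

Lemma geodesic_catl x p q : geodesic e x (p ++ q) -> geodesic e x p.
Proof.
move=> [+ [_ pq_min]]; rewrite cat_path => /andP[p_path q_path].
split=> //; split=> [|r r_path r_last]; first by exists p.
have := pq_min (r ++ q); rewrite cat_path r_path last_cat r_last q_path !size_cat.
by rewrite last_cat leq_add2r; apply.
Qed.

Lemma geodesic_catr x p q : geodesic e x (p ++ q) -> geodesic e (last x p) q.
Proof.
move=> [+ [_ pq_min]]; rewrite cat_path => /andP[p_path q_path].
split=> //; split=> [|r r_path r_last]; first by exists q.
have := pq_min (p ++ r); rewrite cat_path p_path r_path !last_cat r_last !size_cat.
by rewrite leq_add2l; apply.
Qed.

Lemma geodesic_nil x : geodesic e x [::].
Proof. by split=> //; split=> [|]; first exists [::]. Qed.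

Lemma geodesic_edge x y : irreflexive e -> e x y -> geodesic e x [:: y].
Proof.
move=> e_irr exy; split; first by rewrite /= exy.
split=> [|[|z p] //= _ yx]; first by exists [:: y]; rewrite /= exy.
by rewrite yx e_irr in exy.
Qed.

Lemma geodesic_two x y z :
  x != z -> ~~ e x z -> e x y -> e y z -> geodesic e x [:: y; z].
Proof.
move=> neq_xz nexz exy eyz; split; first by rewrite /= exy eyz.
split=> [|[|a [|b p]] //=]; first by exists [:: y; z]; rewrite /= exy eyz.
  by move=> _ xz; rewrite xz eqxx in neq_xz.
by move=> /andP[exa _] az; rewrite -az exa in nexz.
Qed.

Lemma geodesic3_no_shortcut x a b c y :
  geodesic e x [:: a; b; c] -> e x y -> ~~ e y c.
Proof.
move=> [_ [_ /= min3]] exy; apply/negP => eyc.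
by have := min3 [:: y; c]; rewrite /= exy eyc => /(_ isT erefl).
Qed.

Lemma exists_diam (W : {set V}) x0 :
  x0 \in W -> {in W &, forall x y, connect e x y} -> exists d, diam_is W e d.
Proof.
move=> Wx0 W_conn.
pose P n := exists x y, [/\ x \in W, y \in W & dist_is e x y n].
have P_bound n : P n -> n <= #|V|.
  by case=> x [y [_ _ /dist_lt_card/ltnW]].
have [n0 dx0] := connect_dist (W_conn _ _ Wx0 Wx0).
have P_n0 : P n0 by exists x0, x0.
have [d [x [y [Wx Wy dxy]]] d_max] := ex_maxn_prop (ex_intro P _ P_n0) P_bound.
exists d; split; first by exists x, y.
by move=> u v n Wu Wv duv; apply: d_max; exists u, v.
Qed.

End Geodesics.

Section GeodesicTransitivity.
Variables (V : finType) (e : rel V) (aT : finGroupType) (A : {set aT}).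
Variables (act : aT -> V -> V) (s : nat).
Hypothesis A_geod : geod_trans [set: V] e A act s.

Lemma geod_trans_geodesic v p w q :
  size p <= s -> size q = size p -> geodesic e v p -> geodesic e w q ->
  exists2 g, g \in A & act g v = w /\ map (act g) p = q.
Proof.
case: A_geod => _ A_tr ps qp.
exact: A_tr ps v p w q (in_setT v) (in_setT w) erefl qp.
Qed.

Lemma geod_trans_vertex v w : exists2 g, g \in A & act g v = w.
Proof.
have [g Ag [gv _]] := @geod_trans_geodesic v [::] w [::] (leq0n s) erefl
  (geodesic_nil e v) (geodesic_nil e w).
by exists g.
Qed.

Lemma geod_trans_arc : irreflexive e -> 0 < s -> forall x y u w, e x y -> e u w ->
  exists2 g, g \in A & act g x = u /\ act g y = w.
Proof.
move=> e_irr s_gt0 x y u w exy euw.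
have [g Ag [gx [gy]]] := @geod_trans_geodesic x [:: y] u [:: w] s_gt0 erefl
  (geodesic_edge e_irr exy) (geodesic_edge e_irr euw).
by exists g.
Qed.

Lemma geod_trans_geodesic2 : 1 < s -> forall x y z x' y' z',
  geodesic e x [:: y; z] -> geodesic e x' [:: y'; z'] ->
  exists2 g, g \in A & [/\ act g x = x', act g y = y' & act g z = z'].
Proof.
move=> s_gt1 x y z x' y' z' gxyz gxyz'.
have [g Ag [gx [gy gz]]] :=
  @geod_trans_geodesic x [:: y; z] x' [:: y'; z'] s_gt1 erefl gxyz gxyz'.
by exists g.
Qed.

End GeodesicTransitivity.

Lemma path_last_nbhd_const (V : finType) (X : eqType) (e : rel V) (c : V -> X)
    x y p :
  symmetric e -> (forall a b d, e b a -> e b d -> c a = c d) ->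
  e x y -> path e x p -> c (last x p) \in [:: c x; c y].
Proof.
move=> e_sym c_nbhd; elim: p x y => [|z p IHp] x y exy /=.
  by rewrite inE eqxx.
case/andP=> exz /(IHp z x); rewrite e_sym exz (c_nbhd z x y) // !inE => /(_ isT).
by rewrite orbC.
Qed.

Lemma card_imset_nbhd_const (V X : finType) (e : rel V) (c : V -> X) x y :
  symmetric e -> (forall u v, connect e u v) ->
  (forall a b d, e b a -> e b d -> c a = c d) -> e x y ->
  #|c @: [set: V]| <= 2.
Proof.
move=> e_sym e_conn c_nbhd exy.
have sub_pair : c @: [set: V] \subset [set c x; c y].
  apply/subsetP => _ /imsetP[z _ ->]; have /connectP[p p_path ->] := e_conn x z.
  by have := path_last_nbhd_const e_sym c_nbhd exy p_path; rewrite !inE.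
by rewrite (leq_trans (subset_leq_card sub_pair)) // cards2; case: (_ != _).
Qed.

Lemma bipartite_of_card_imset2 (V X : finType) (e : rel V) (c : V -> X) :
  #|c @: [set: V]| = 2 -> (forall x y, e x y -> c x != c y) -> bipartite e.
Proof.
move=> /eqP/cards2P[c1 [c2 [neq12 im_c]]] c_adj.
have im_cP x : (c x == c1) || (c x == c2).
  by have := imset_f c (in_setT x); rewrite im_c !inE.
exists (fun x => c x == c1) => x y exy; have := c_adj x y exy.
by case/orP: (im_cP x) => /eqP->; case/orP: (im_cP y) => /eqP->;
  rewrite ?eqxx // eq_sym; case: eqP.
Qed.

Section CompleteMultipartite.
Variables (V : finType) (e : rel V) (cls : V -> {set V}) (b : nat) (x0 : V).
Hypothesis cls_refl : forall x, x \in cls x.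
Hypothesis cls_eq : forall x y, y \in cls x -> cls y = cls x.
Hypothesis card_cls : forall x, #|cls x| = b.
Hypothesis e_cls : forall x y, e x y = (cls x != cls y).

Lemma graph_iso_Kmb : graph_iso e (@Kmb #|cls @: [set: V]| b).
Proof.
have cls_im x : cls x \in cls @: [set: V] by rewrite imset_f ?inE.
have b_gt0 : 0 < b.
  by rewrite -(card_cls x0) card_gt0; apply/set0Pn; exists x0; apply: cls_refl.
pose h x := (enum_rank_in (cls_im x0) (cls x),
             insubd (Ordinal b_gt0) (index x (enum (cls x)))).
pose k (ij : 'I_#|cls @: [set: V]| * 'I_b) := nth x0 (enum (enum_val ij.1)) ij.2.
exists h; split.
  exists k => [x | [i j]]; rewrite /h /k /=.
    have x_lt : index x (enum (cls x)) < b.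
      by rewrite -(card_cls x) cardE index_mem mem_enum cls_refl.
    by rewrite enum_rankK_in // val_insubd x_lt nth_index ?mem_enum ?cls_refl.
  have /imsetP[z _ Ei] := enum_valP i.
  have j_lt : j < size (enum (enum_val i)) by rewrite -cardE Ei card_cls.
  have y_cls : cls (nth x0 (enum (enum_val i)) j) = enum_val i.
    by rewrite Ei; apply: cls_eq; rewrite -Ei -mem_enum mem_nth.
  by rewrite y_cls enum_valK_in index_uniq ?enum_uniq // valKd.
move=> x y; rewrite /Kmb /= e_cls; congr negb; apply/eqP/eqP => [Ecls | -> //].
by have := congr1 enum_val Ecls; rewrite !enum_rankK_in.
Qed.

End CompleteMultipartite.

Section Orbits.
Variables (T : finType) (N : {group {perm T}}).
Local Notation orb := (orbit 'P N).

Lemma orbit_in_orbs x : orb x \in orbs N.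
Proof. by rewrite imset_f ?inE. Qed.

Lemma orbs_orbit B y : B \in orbs N -> y \in B -> orb y = B.
Proof. by case/imsetP=> z _ -> /orbit_eqP. Qed.

Lemma orbit_perm n x : n \in N -> orb (n x) = orb x.
Proof. exact: (orbit_act 'P). Qed.

Lemma transitive_of_orbit_eq x :
  (forall z, orb z = orb x) -> [transitive N, on [set: T] | 'P].
Proof.
move=> orb_x; apply/imsetP; exists x => //.
by apply/setP => z; rewrite in_setT -(orb_x z) orbit_refl.
Qed.

Lemma set_act_orbit g x : g \in 'N(N)%g -> set_act g (orb x) = orb (g x).
Proof.
move=> nNg; apply/setP => z; apply/imsetP/orbitP => /=.
  case=> _ /orbitP[n Nn <-] ->; exists (n ^ g)%g; first by rewrite memJ_norm.
  by rewrite apermE conjgE !permM permK.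
case=> n Nn <-; exists ((n ^ g^-1)%g x).
  by apply: mem_orbit; rewrite memJ_norm ?groupV.
by rewrite apermE conjgE invgK !permM permKV.
Qed.

Lemma orbit_eq_perm g x y : g \in 'N(N)%g -> orb x = orb y -> orb (g x) = orb (g y).
Proof. by move=> nNg Exy; rewrite -!set_act_orbit // Exy. Qed.

Lemma card_orbit_perm g x : g \in 'N(N)%g -> #|orb (g x)| = #|orb x|.
Proof. by move=> nNg; rewrite -set_act_orbit // card_imset //; apply: perm_inj. Qed.

End Orbits.

Definition nbhd_orbit_inj (T : finType) (e : rel T) (N : {set {perm T}}) :=
  forall v u w, e v u -> e v w -> orbit 'P N u = orbit 'P N w -> u = w.

Section QuotientGraph.
Variables (T : finType) (e : rel T) (N : {group {perm T}}).
Local Notation orb := (orbit 'P N).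
Local Notation eN := (quot_rel e N).
Hypothesis N_aut : forall n, n \in N -> forall x y, e (n x) (n y) = e x y.
Hypothesis adj_orbit_neq : forall x y, e x y -> orb x != orb y.

Lemma quot_rel_orbit x y : e x y -> eN (orb x) (orb y).
Proof.
move=> exy; rewrite /quot_rel !orbit_in_orbs adj_orbit_neq //=.
by apply/exists_inP; exists x; rewrite ?orbit_refl //; apply/exists_inP; exists y;
  rewrite ?orbit_refl.
Qed.

Lemma quot_path x p : path e x p -> path eN (orb x) (map orb p).
Proof.
by elim: p x => //= y p IHp x /andP[exy p_path]; rewrite quot_rel_orbit ?IHp.
Qed.

Lemma quot_connect x y : connect e x y -> connect eN (orb x) (orb y).
Proof.
move=> /connectP[p p_path ->]; apply/connectP; exists (map orb p).
  exact: quot_path.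
by rewrite last_map.
Qed.

Lemma quot_rel_lift x C : eN (orb x) C -> exists2 y, e x y & orb y = C.
Proof.
case/and4P=> _ C_orbs _ /exists_inP[a /orbitP[n Nn <-] /exists_inP[c Cc enxc]].
exists (n^-1%g c); first by rewrite -(N_aut Nn) permKV.
by rewrite orbit_perm ?groupV // (orbs_orbit C_orbs Cc).
Qed.

Lemma quot_path_lift x p :
  path eN (orb x) p -> exists2 r, path e x r & map orb r = p.
Proof.
elim: p x => [|C p IHp] x /=; first by exists [::].
case/andP=> /quot_rel_lift[y exy <-] /IHp[r r_path <-].
by exists (y :: r); rewrite /= ?exy.
Qed.

Lemma quot_geodesic_lift x p :
  geodesic eN (orb x) p -> exists2 r, geodesic e x r & map orb r = p.
Proof.
move=> [p_path [_ p_min]]; have [r r_path r_p] := quot_path_lift p_path.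
exists r => //; split=> //; split=> [|r' r'_path r'_last]; first by exists r.
have := p_min _ (quot_path r'_path); rewrite -r_p !last_map r'_last !size_map.
by apply.
Qed.

Lemma is_cover_of_nbhd_orbit_inj : nbhd_orbit_inj e N -> is_cover e N.
Proof.
move=> inj B C BC v vB; have [B_orbs C_orbs _ _] := and4P BC.
rewrite -(orbs_orbit B_orbs vB) in BC; have [y evy yC] := quot_rel_lift BC.
apply/eqP/cards1P; exists y; apply/setP => w; rewrite !inE.
apply/andP/eqP => [[Cw evw] | ->]; last by rewrite -yC orbit_refl.
by apply: (inj _ _ _ evw evy); rewrite yC (orbs_orbit C_orbs Cw).
Qed.

Lemma semiregular_of_nbhd_orbit_inj :
  symmetric e -> (forall x y, connect e x y) -> nbhd_orbit_inj e N -> semiregular N.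
Proof.
move=> e_sym e_conn inj x; apply/trivgP/subsetP => n /setIP[Nn /astab1P].
rewrite /= apermE => nx.
have fix_nbr u w : n u = u -> e u w -> n w = w.
  move=> nu euw; apply: (inj u _ _ _ euw (orbit_perm _ Nn)).
  by rewrite -{1}nu N_aut.
have fix_closed : closed e [pred y | n y == y].
  by move=> u w euw; apply/eqP/eqP => /fix_nbr; apply; rewrite // e_sym.
apply/set1gP/permP => y; rewrite perm1; apply/eqP.
by have := closed_connect fix_closed (e_conn x y); rewrite !inE nx eqxx.
Qed.

End QuotientGraph.

Section GeodesicTransitiveGraph.
Variables (T : finType) (e : rel T) (G N : {group {perm T}}).
Local Notation orb := (orbit 'P N).
Hypothesis e_sym : symmetric e.
Hypothesis e_conn : forall x y, connect e x y.
Hypothesis G_aut : forall g, g \in G -> forall x y, e (g x) (g y) = e x y.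
Hypothesis N_normal : (N <| G)%g.
Hypothesis N_intrans : ~ [transitive N, on [set: T] | 'P].
Hypothesis G_vtrans : forall x y, exists2 g, g \in G & g x = y.
Hypothesis G_atrans : forall x y u w, e x y -> e u w ->
  exists2 g, g \in G & g x = u /\ g y = w.

Let nNG : {subset G <= 'N(N)%g} := subsetP (normal_norm N_normal).
Let N_aut n : n \in N -> forall x y, e (n x) (n y) = e x y :=
  fun Nn => G_aut (subsetP (normal_sub N_normal) n Nn).

Lemma adj_orbit_neq x y : e x y -> orb x != orb y.
Proof.
move=> exy; apply/eqP => Exy; apply: N_intrans.
apply: (transitive_of_orbit_eq (x := x)) => z.
have edge_orb u w : e u w -> orb u = orb w.
  move=> euw; have [g Gg [<- <-]] := G_atrans exy euw.
  exact: orbit_eq_perm (nNG Gg) Exy.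
have orb_closed : closed e [pred z | orb z == orb x].
  by move=> u w /edge_orb Euw; rewrite !inE Euw.
by apply/eqP; have := closed_connect orb_closed (e_conn x z); rewrite !inE eqxx.
Qed.

Lemma card_orbs_gt1 (x0 : T) : 1 < #|orbs N|.
Proof.
rewrite ltnNge; apply/negP => /card_le1_eqP orbs_eq; apply: N_intrans.
apply: (transitive_of_orbit_eq (x := x0)) => z.
by apply: orbs_eq; apply: orbit_in_orbs.
Qed.

Lemma exists_nbr_other_orbit x y :
  2 < #|orbs N| -> e x y -> exists2 q, e x q & orb q != orb y.
Proof.
move=> orbs_gt2 exy; apply: NNPP => no_q.
have nbrs_x q : e x q -> orb q = orb y.
  by move=> exq; apply/eqP/negPn/negP => neq; apply: no_q; exists q.
have nbhd_const a b c : e b a -> e b c -> orb a = orb c.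
  move=> eba ebc; have [g Gg gx] := G_vtrans x b.
  have nbr z : e b z -> orb (g^-1%g z) = orb y.
    by move=> ebz; apply: nbrs_x; rewrite -(G_aut Gg) permKV gx.
  by rewrite -(permKV g a) -(permKV g c); apply: orbit_eq_perm; rewrite ?nNG ?nbr.
by have /(leq_trans orbs_gt2) := card_imset_nbhd_const e_sym e_conn nbhd_const exy.
Qed.

Section CollidingNeighbours.
Hypothesis G_geod2 : forall x y z x' y' z',
  geodesic e x [:: y; z] -> geodesic e x' [:: y'; z'] ->
  exists2 g, g \in G & [/\ g x = x', g y = y' & g z = z'].
Hypothesis orbs_gt2 : 2 < #|orbs N|.
Variables v u w : T.
Hypotheses (evu : e v u) (evw : e v w) (Euw : orb u = orb w) (neq_uw : u != w).

Lemma geodesic2_orbit x y z : geodesic e x [:: y; z] -> orb x = orb z.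
Proof.
move=> gxyz; have neuw : ~~ e u w by apply/negP => /adj_orbit_neq; rewrite Euw eqxx.
have euv : e u v by rewrite e_sym.
have [g Gg [<- _ <-]] := G_geod2 (geodesic_two neq_uw neuw euv evw) gxyz.
exact: orbit_eq_perm (nNG Gg) Euw.
Qed.

Lemma adj_of_common_nbr a b c : e b a -> e b c -> orb a != orb c -> e a c.
Proof.
move=> eba ebc neq_ac; apply/idPn => neac.
have neq : a != c by apply: contraNneq neq_ac => ->.
have eab : e a b by rewrite e_sym.
by rewrite (geodesic2_orbit (geodesic_two neq neac eab ebc)) eqxx in neq_ac.
Qed.

Lemma no_geodesic3 x a b c : ~ geodesic e x [:: a; b; c].
Proof.
move=> gx3; have [/and4P[exa eab ebc _] _] := gx3.
have Exb : orb x = orb b.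
  exact: geodesic2_orbit (geodesic_catl (p := [:: a; b]) (q := [:: c]) gx3).
have Eac : orb a = orb c.
  exact: geodesic2_orbit (geodesic_catr (p := [:: a]) (q := [:: b; c]) gx3).
have eax : e a x by rewrite e_sym.
have [q eaq neq_qx] := exists_nbr_other_orbit orbs_gt2 eax.
(* q is adjacent to x, b and c, so x q c is a shortcut of the geodesic. *)
have exq : e x q by apply: adj_of_common_nbr eax eaq _; rewrite eq_sym.
have ebq : e b q by apply: adj_of_common_nbr eab eaq _; rewrite -Exb eq_sym.
have eqc : e q c.
  by apply: adj_of_common_nbr ebq ebc _; rewrite -Eac eq_sym adj_orbit_neq.
by have := geodesic3_no_shortcut gx3 exq; rewrite eqc.
Qed.

Lemma adj_orbitE x y : e x y = (orb x != orb y).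
Proof.
apply/idP/idP => [/adj_orbit_neq // | neq_xy].
have [n dxy] := connect_dist (e_conn x y).
have [[|a [|b [|c p]]] [gp /= p_last _]] := dist_geodesic dxy.
- by rewrite p_last eqxx in neq_xy.
- by case: gp => /andP[exa _]; rewrite -p_last.
- by rewrite -p_last (geodesic2_orbit gp) eqxx in neq_xy.
- by have := no_geodesic3 (geodesic_catl (p := [:: a; b; c]) (q := p) gp).
Qed.

Lemma graph_iso_Kmb_orbits : graph_iso e (@Kmb #|orbs N| #|orb u|).
Proof.
apply: (graph_iso_Kmb u) => [x | x y /orbit_eqP // | x | x y].
- exact: orbit_refl.
- by have [g Gg <-] := G_vtrans u x; apply: card_orbit_perm; rewrite nNG.
- exact: adj_orbitE.
Qed.

Lemma card_orbit_gt1 : 1 < #|orb u|.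
Proof. by apply/card_gt1P; exists u, w; rewrite orbit_refl Euw orbit_refl. Qed.

End CollidingNeighbours.

Lemma nbhd_orbit_inj_of_not_Kmb :
  (forall x y z x' y' z', geodesic e x [:: y; z] -> geodesic e x' [:: y'; z'] ->
     exists2 g, g \in G & [/\ g x = x', g y = y' & g z = z']) ->
  2 < #|orbs N| -> (forall m b, 3 <= m -> 2 <= b -> ~ graph_iso e (@Kmb m b)) ->
  nbhd_orbit_inj e N.
Proof.
move=> G_geod2 orbs_gt2 not_Kmb v u w evu evw Euw.
apply/eqP; apply: contraT => neq_uw.
have iso := graph_iso_Kmb_orbits G_geod2 orbs_gt2 evu evw Euw neq_uw.
by case: (not_Kmb _ _ orbs_gt2 (card_orbit_gt1 Euw neq_uw) iso).
Qed.

Lemma quot_geod_trans (x0 : T) s : geod_trans [set: T] e G (fun g x => g x) s ->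
  exists d, diam_is (orbs N) (quot_rel e N) d /\
    geod_trans (orbs N) (quot_rel e N) G (@set_act T) (minn s d).
Proof.
move=> G_geod.
have orbs_conn : {in orbs N &, forall B C, connect (quot_rel e N) B C}.
  move=> B C /imsetP[x _ ->] /imsetP[y _ ->].
  by apply: (quot_connect adj_orbit_neq); apply: e_conn.
have [d diam] := exists_diam (orbit_in_orbs N x0) orbs_conn.
exists d; split => //; split.
  have [[B [C [B_orbs _ dBC]]] _] := diam.
  have [r [gr _ r_size]] := dist_geodesic dBC.
  exists B, (take (minn s d) r); split => //.
    by rewrite size_takel // r_size geq_minr.
  by apply: (geodesic_catl (q := drop (minn s d) r)); rewrite cat_take_drop.
move=> i le_i _ p _ q /imsetP[x _ ->] /imsetP[y _ ->] p_size q_size gp gq.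
have [p' gp' Ep] := quot_geodesic_lift N_aut adj_orbit_neq gp.
have [q' gq' Eq] := quot_geodesic_lift N_aut adj_orbit_neq gq.
have p'_size : size p' <= s.
  by rewrite -(size_map (orbit 'P N)) Ep p_size (leq_trans le_i) ?geq_minl.
have q'_size : size q' = size p'.
  by rewrite -(size_map (orbit 'P N)) Eq q_size -p_size -Ep size_map.
have [g Gg [<- g_p']] := geod_trans_geodesic G_geod p'_size q'_size gp' gq'.
exists g => //; split; first exact: set_act_orbit (nNG Gg).
rewrite -Ep -Eq -g_p' -!map_comp; apply: eq_map => z /=.
by apply: set_act_orbit; rewrite nNG.
Qed.

End GeodesicTransitiveGraph.

Theorem lemma3p2 (T : finType) (e : rel T) (G N : {group {perm T}}) (s : nat) :
  simple_graph e ->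
  (forall x y, connect e x y) ->
  (forall g, g \in G -> forall x y, e (g x) (g y) = e x y) ->
  2 <= s ->
  geod_trans [set: T] e G (fun g x => g x) s ->
  (N :!=: 1)%g -> (N <| G)%g ->
  ~ [transitive N, on [set: T] | 'P] ->
  (forall m b, 3 <= m -> 2 <= b -> ~ graph_iso e (@Kmb m b)) ->
  (#|orbs N| = 2 /\ bipartite e) \/
  [/\ 3 <= #|orbs N|, semiregular N, is_cover e N &
      exists d, diam_is (orbs N) (quot_rel e N) d /\
        geod_trans (orbs N) (quot_rel e N) G (@set_act T) (minn s d)].
Proof.
move=> [e_sym e_irr] e_conn G_aut s_ge2 G_geod _ N_normal N_intrans not_Kmb.
have [[x0 _] _] := G_geod.
have G_vtrans := geod_trans_vertex G_geod.
have G_atrans := geod_trans_arc G_geod e_irr (ltnW s_ge2).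
have G_geod2 := geod_trans_geodesic2 G_geod s_ge2.
have adj_orbit := adj_orbit_neq e_conn N_normal N_intrans G_atrans.
have N_aut n : n \in N -> forall x y, e (n x) (n y) = e x y.
  by move=> Nn; apply: G_aut; apply: (subsetP (normal_sub N_normal)).
case: (ltngtP #|orbs N| 2) => [orbs_lt2 | orbs_gt2 | orbs2].
- by rewrite ltnNge (card_orbs_gt1 N_intrans x0) in orbs_lt2.
- have inj := nbhd_orbit_inj_of_not_Kmb e_sym e_conn G_aut N_normal N_intrans
    G_vtrans G_atrans G_geod2 orbs_gt2 not_Kmb.
  right; split => //.
  + exact: semiregular_of_nbhd_orbit_inj N_aut e_sym e_conn inj.
  + exact: is_cover_of_nbhd_orbit_inj N_aut inj.
  + exact: quot_geod_trans e_conn G_aut N_normal N_intrans G_atrans x0 s G_geod.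
- by left; split => //; apply: bipartite_of_card_imset2 orbs2 adj_orbit.
Qed.
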